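(* Let $k\geq 1$, let $\Lambda$ be a row-finite $k$-graph with no sources, and let $R$ be a commutative ring with $1$. Let $\mathrm{KP}_R(\Lambda)$ be the Kumjian-Pask algebra of $\Lambda$ over $R$ and $Z(\mathrm{KP}_R(\Lambda))$ its center. (1) If $\Lambda$ is aperiodic and cofinal and $\Lambda^0$ is finite, then $\mathrm{KP}_R(\Lambda)$ has an identity $1_{\mathrm{KP}_R(\Lambda)}$ and $Z(\mathrm{KP}_R(\Lambda))=R\,1_{\mathrm{KP}_R(\Lambda)}=\{r1_{\mathrm{KP}_R(\Lambda)}: r\in R\}$. (2) If $\Lambda$ is cofinal and $\Lambda^0$ is infinite, then $Z(\mathrm{KP}_R(\Lambda))=\{0\}$.
   Context: $\mathbb{N}^k$ is regarded as a category with one object, composition being addition. A $k$-graph is a countable category $\Lambda$ together with a functor $d:\Lambda\to\mathbb{N}^k$ (the degree) with the unique factorization property: whenever $d(\lambda)=m+n$ there are unique $\mu,\nu\in\Lambda$ with $d(\mu)=m$, $d(\nu)=n$, $\lambda=\mu\nu$. Objects are identified with morphisms of degree $0$ and called vertices; $\Lambda^0$ is the set of vertices, $\Lambda^n=d^{-1}(n)$, $r,s$ are the range and source maps, and $\lambda\mu$ is defined when $s(\lambda)=r(\mu)$. For $v\in\Lambda^0$, $v\Lambda^n=\{\lambda\in\Lambda^n:r(\lambda)=v\}$. $\Lambda$ is row-finite if $v\Lambda^n$ is finite for all $v,n$, and has no sources if $v\Lambda^n\neq\emptyset$ for all $v,n$. For $\lambda\in\Lambda$ and $0\le m\le n\le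 d(\lambda)$, $\lambda(m,n)$ denotes the unique path of degree $n-m$ with $\lambda=\lambda'\lambda(m,n)\lambda''$ where $d(\lambda')=m$, $d(\lambda'')=d(\lambda)-n$. Aperiodic: for every $v\in\Lambda^0$ and $m\neq n\in\mathbb{N}^k$ there is $\lambda$ with $r(\lambda)=v$, $d(\lambda)\geq m\vee n$ and $\lambda(m,m+d(\lambda)-(m\vee n))\neq\lambda(n,n+d(\lambda)-(m\vee n))$. Let $\Omega_k$ be the $k$-graph with objects $\mathbb{N}^k$, morphisms $\{(m,n):m\le n\}$, $r(m,n)=m$, $s(m,n)=n$, $d(m,n)=n-m$. An infinite path is a degree-preserving functor $x:\Omega_k\to\Lambda$; write $x(m)=x(m,m)$. $\Lambda$ is cofinal if for every infinite path $x$ and every $v\in\Lambda^0$ there is $m\in\mathbb{N}^k$ and a path $\lambda$ with $r(\lambda)=v$, $s(\lambda)=x(m)$. Let $\Lambda^{\neq0}$ be the paths of nonzero degree and introduce a formal symbol $\lambda^*$ for each $\lambda\in\Lambda^{\neq 0}$. A Kumjian-Pask $\Lambda$-family in an $R$-algebra $A$ consists of $P:\Lambda^0\to A$ and $S:\Lambda^{\neq0}\cup\{\lambda^*\}\to A$ such that: (KP1) the $P_v$ are mutually orthogonal idempotents; (KP2) for $\lambda,\mu\in\Lambda^{\ne0}$ with $r(\mu)=s(\lambda)$: $S_\lambda S_\mu=S_{\lambda\mu}$, $S_{\mu^*}S_{\lambda^*}=S_{(\lambda\mu)^*}$, $P_{r(\lambda)}S_\lambda=S_\lambda=S_\lambda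 P_{s(\lambda)}$, $P_{s(\lambda)}S_{\lambda^*}=S_{\lambda^*}=S_{\lambda^*}P_{r(\lambda)}$; (KP3) for $\lambda,\mu\in\Lambda^{\neq0}$ with $d(\lambda)=d(\mu)$, $S_{\lambda^*}S_\mu=\delta_{\lambda,\mu}P_{s(\lambda)}$; (KP4) for $v\in\Lambda^0$ and $n\neq0$, $P_v=\sum_{\lambda\in v\Lambda^n}S_\lambda S_{\lambda^*}$. $\mathrm{KP}_R(\Lambda)$ is the $R$-algebra generated by a Kumjian-Pask family $(p,s)$ that is universal: every Kumjian-Pask family in an $R$-algebra $A$ is the image of $(p,s)$ under a unique $R$-algebra homomorphism $\mathrm{KP}_R(\Lambda)\to A$. *)

From HB Require Import structures.
From mathcomp Require Import all_boot all_algebra.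
Set Implicit Arguments. Unset Strict Implicit. Unset Printing Implicit Defensive.
Import GRing.Theory.
Local Open Scope ring_scope.

Definition deg (k : nat) := {ffun 'I_k -> nat}.
Definition dzero k : deg k := [ffun _ => 0%N].
Definition dadd k (m n : deg k) : deg k := [ffun i => (m i + n i)%N].
Definition dsub k (m n : deg k) : deg k := [ffun i => (m i - n i)%N].
Definition djoin k (m n : deg k) : deg k := [ffun i => maxn (m i) (n i)].
Definition dle k (m n : deg k) : Prop := forall i, (m i <= n i)%N.

(* ---------- k-graphs ----------
   A countable category given by its (countable) type of morphisms, with
   objects identified with degree-0 morphisms (identities); composition
   [kcomp l m] = "l m" is total but only meaningful when [ks l = kr m]. *)
Record kgraph (k : nat) := KGraph {
  kpath : countType;
  kd : kpath -> deg k;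
  kr : kpath -> kpath;
  ks : kpath -> kpath;
  kcomp : kpath -> kpath -> kpath;
  kd_r : forall l, kd (kr l) = dzero k;
  kd_s : forall l, kd (ks l) = dzero k;
  kvert_r : forall v, kd v = dzero k -> kr v = v;
  kvert_s : forall v, kd v = dzero k -> ks v = v;
  kcomp_r : forall l m, ks l = kr m -> kr (kcomp l m) = kr l;
  kcomp_s : forall l m, ks l = kr m -> ks (kcomp l m) = ks m;
  kcomp_d : forall l m, ks l = kr m -> kd (kcomp l m) = dadd (kd l) (kd m);
  kcomp_idl : forall l, kcomp (kr l) l = l;
  kcomp_idr : forall l, kcomp l (ks l) = l;
  kcomp_assoc : forall l m n, ks l = kr m -> ks m = kr n ->
      kcomp (kcomp l m) n = kcomp l (kcomp m n);
  kfactor : forall l m n, kd l = dadd m n ->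
      exists! mn : kpath * kpath,
        [/\ ks mn.1 = kr mn.2, kd mn.1 = m, kd mn.2 = n & l = kcomp mn.1 mn.2]
}.

Section KGraphDefs.
Variables (k : nat) (G : kgraph k).
Local Notation P := (kpath G).
Local Notation d := (@kd k G).
Local Notation r := (@kr k G).
Local Notation s := (@ks k G).
Local Notation comp := (@kcomp k G).

Definition vertex (v : P) : Prop := d v = dzero k.
Definition nonzero_deg (l : P) : Prop := d l <> dzero k.

Definition row_finite : Prop :=
  forall v n, vertex v -> exists sq : seq P, forall l, r l = v -> d l = n -> l \in sq.
Definition no_sources : Prop :=
  forall v n, vertex v -> exists l, r l = v /\ d l = n.
Definition finite_vertices : Prop :=
  exists sq : seq P, forall v, vertex v -> v \in sq.

Definition segment (l : P) (m n : deg k) (mu : P) : Prop :=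
  exists l1 l2, [/\ d l1 = m, d mu = dsub n m, d l2 = dsub (d l) n,
                    s l1 = r mu & s mu = r l2 /\ l = comp l1 (comp mu l2)].

Definition aperiodic : Prop :=
  forall v, vertex v -> forall m n : deg k, m <> n ->
    exists l, [/\ r l = v, dle (djoin m n) (d l) &
      forall mu nu,
        segment l m (dadd m (dsub (d l) (djoin m n))) mu ->
        segment l n (dadd n (dsub (d l) (djoin m n))) nu -> mu <> nu].

(* infinite path: degree-preserving functor Omega_k -> Lambda, given by its
   values x m n = x(m,n) on the morphisms (m,n), m <= n, of Omega_k *)
Definition infinite_path (x : deg k -> deg k -> P) : Prop :=
  [/\ forall m n, dle m n -> d (x m n) = dsub n m,
      forall m n, dle m n -> r (x m n) = x m m /\ s (x m n) = x n n &
      forall m n q, dle m n -> dle n q -> x m q = comp (x m n) (x n q)].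

Definition cofinal : Prop :=
  forall x, infinite_path x -> forall v, vertex v ->
    exists (m : deg k) (l : P), r l = v /\ s l = x m m.
End KGraphDefs.

Record nualg (R : comPzRingType) := NUAlg {
  nua_car :> lmodType R;
  nua_mul : nua_car -> nua_car -> nua_car;
  nua_mulA : forall a b c, nua_mul a (nua_mul b c) = nua_mul (nua_mul a b) c;
  nua_mulDl : forall a b c, nua_mul (a + b) c = nua_mul a c + nua_mul b c;
  nua_mulDr : forall a b c, nua_mul a (b + c) = nua_mul a b + nua_mul a c;
  nua_mulZl : forall (x : R) a b, nua_mul (x *: a) b = x *: nua_mul a b;
  nua_mulZr : forall (x : R) a b, nua_mul a (x *: b) = x *: nua_mul a b
}.
Arguments nua_mul {R} _ _ _.

Definition nua_hom (R : comPzRingType) (A B : nualg R) (f : A -> B) : Prop :=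
  [/\ forall a b, f (a + b) = f a + f b,
      forall (x : R) a, f (x *: a) = x *: f a &
      forall a b, f (nua_mul A a b) = nua_mul B (f a) (f b)].

Definition central (R : comPzRingType) (A : nualg R) (z : A) : Prop :=
  forall a, nua_mul A z a = nua_mul A a z.

(* ---------- Kumjian-Pask families and the Kumjian-Pask algebra ----------
   p is only used on vertices, S and Sstar only on paths of nonzero degree;
   Sstar l stands for S_{l^*}. *)
Section KP.
Variables (k : nat) (G : kgraph k) (R : comPzRingType).
Local Notation P := (kpath G).
Local Notation d := (@kd k G).
Local Notation r := (@kr k G).
Local Notation s := (@ks k G).
Local Notation comp := (@kcomp k G).

Definition KP_family (A : nualg R) (p S Sstar : P -> A) : Prop :=
  let mul := nua_mul A in
  [/\
      forall v w, vertex v -> vertex w ->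
        mul (p v) (p w) = if v == w then p v else 0,
      (forall l m, nonzero_deg l -> nonzero_deg m -> r m = s l ->
         mul (S l) (S m) = S (comp l m) /\
         mul (Sstar m) (Sstar l) = Sstar (comp l m)),
      (forall l, nonzero_deg l ->
         [/\ mul (p (r l)) (S l) = S l, mul (S l) (p (s l)) = S l,
             mul (p (s l)) (Sstar l) = Sstar l &
             mul (Sstar l) (p (r l)) = Sstar l]),
      (forall l m, nonzero_deg l -> nonzero_deg m -> d l = d m ->
         mul (Sstar l) (S m) = if l == m then p (s l) else 0) &
      (* KP4 : the sum over the finite set v Lambda^n, listed without repetition *)
      forall v n, vertex v -> n <> dzero k ->
        forall sq : seq P, uniq sq ->
          (forall l, l \in sq <-> (r l = v /\ d l = n)) ->
          p v = \sum_(l <- sq) mul (S l) (Sstar l)].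

Definition KP_generated (A : nualg R) (p S Sstar : P -> A) : Prop :=
  forall X : A -> Prop,
    (forall v, vertex v -> X (p v)) ->
    (forall l, nonzero_deg l -> X (S l) /\ X (Sstar l)) ->
    X 0 ->
    (forall a b, X a -> X b -> X (a + b)) ->
    (forall (x : R) a, X a -> X (x *: a)) ->
    (forall a b, X a -> X b -> X (nua_mul A a b)) ->
    forall a, X a.

Definition KP_agree (A B : nualg R) (f : A -> B) (p S Sstar : P -> A)
  (q T Tstar : P -> B) : Prop :=
  (forall v, vertex v -> f (p v) = q v) /\
  (forall l, nonzero_deg l -> f (S l) = T l /\ f (Sstar l) = Tstar l).

Definition KP_universal (A : nualg R) (p S Sstar : P -> A) : Prop :=
  forall (B : nualg R) (q T Tstar : P -> B), KP_family q T Tstar ->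
    exists f : A -> B,
      [/\ nua_hom f, KP_agree f p S Sstar q T Tstar &
        forall g : A -> B, nua_hom g -> KP_agree g p S Sstar q T Tstar ->
          forall a, g a = f a].

Definition is_KP_algebra (A : nualg R) (p S Sstar : P -> A) : Prop :=
  [/\ KP_family p S Sstar, KP_generated p S Sstar & KP_universal p S Sstar].
End KP.

(* Every element of KP_R(Lambda) is a combination of monomials s_mu s_nu*, so
   it has a local unit sum_{v in F} p_v; when Lambda^0 is finite the sum over all
   vertices is an identity.  If z is central and p_v z = c p_v, then
   p_{s l} z = s_l* z s_l = c p_{s l} for every path l from v, and KP4 with
   degree (1,...,1) gives the converse step; by cofinality p_u z = c p_u for
   every vertex u.  With infinitely many vertices take v outside a local unit
   of z, so c = 0 and z = 0.  With finitely many, aperiodicity provides c: for a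
   monomial s_mu s_nu* with d mu <> d nu, the two paths can be extended to
   factorise differently, so along a suitable extension al of any path g,
   s_(g al be)* a s_(g al be) is a fixed multiple of p_(s be); this property
   passes to sums, and for central z and g = v it yields p_(s al) z = c p_(s al). *)

From HB Require Import structures.
From mathcomp Require Import all_boot all_algebra.
From mathcomp Require Import zify.
From Stdlib Require Import ClassicalEpsilon Classical_Prop.
Import GRing.Theory.

Set Implicit Arguments.
Unset Strict Implicit.
Unset Printing Implicit Defensive.

Section Degrees.
Variable k : nat.
Implicit Types m n q : deg k.

Lemma deg_ext m n : (forall i, m i = n i) -> m = n.
Proof. by move=> h; apply/ffunP. Qed.

Lemma dle_refl m : dle m m.
Proof. by []. Qed.

Lemma dle_trans m n q : dle m n -> dle n q -> dle m q.
Proof. by move=> h1 h2 i; apply: leq_trans (h1 i) (h2 i). Qed.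

Lemma dle_addr m n : dle m (dadd m n).
Proof. by move=> i; rewrite ffunE leq_addr. Qed.

Lemma dle_joinl m n : dle m (djoin m n).
Proof. by move=> i; rewrite ffunE leq_maxl. Qed.

Lemma dle_joinr m n : dle n (djoin m n).
Proof. by move=> i; rewrite ffunE leq_maxr. Qed.

Lemma dadd_dsub m n : dle m n -> dadd m (dsub n m) = n.
Proof. by move=> h; apply: deg_ext => i; rewrite !ffunE subnKC. Qed.

Lemma dsub_dadd m n : dsub (dadd m n) m = n.
Proof. by apply: deg_ext => i; rewrite !ffunE addKn. Qed.

Lemma dsubnn m : dsub m m = dzero k.
Proof. by apply: deg_ext => i; rewrite !ffunE subnn. Qed.

Lemma daddI m : injective (dadd m).
Proof. by move=> x y /(congr1 (fun f => dsub f m)); rewrite !dsub_dadd. Qed.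

Lemma dadd_eq0 m n : dadd m n = dzero k -> m = dzero k.
Proof.
move=> h; apply: deg_ext => i.
by have := congr1 (fun f : deg k => f i) h; rewrite !ffunE; lia.
Qed.

Definition dconst N : deg k := [ffun=> N].

Definition dmax q := (\max_(i < k) q i)%N.

Lemma dle_dmax q : dle q (dconst (dmax q)).
Proof. by move=> i; rewrite ffunE; apply: (@leq_bigmax _ (fun i : 'I_k => q i)). Qed.

Lemma dconst1_neq0 : (0 < k)%N -> dconst 1 <> dzero k.
Proof. by move=> k_gt0 /(congr1 (fun f : deg k => f (Ordinal k_gt0))); rewrite !ffunE. Qed.

End Degrees.

Section Factorisation.
Variables (k : nat) (G : kgraph k).
Local Notation P := (kpath G).
Local Notation d := (@kd k G).
Local Notation r := (@kr k G).
Local Notation s := (@ks k G).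
Local Notation comp := (@kcomp k G).
Local Notation ones := (dconst k 1).
Implicit Types (l : P) (m n q : deg k).

Lemma vertex_r l : vertex (r l). Proof. exact: kd_r. Qed.
Lemma vertex_s l : vertex (s l). Proof. exact: kd_s. Qed.
Lemma kr_kr l : r (r l) = r l. Proof. exact/kvert_r/kd_r. Qed.
Lemma ks_kr l : s (r l) = r l. Proof. exact/kvert_s/kd_r. Qed.
Lemma ks_ks l : s (s l) = s l. Proof. exact/kvert_s/kd_s. Qed.
Lemma kr_ks l : r (s l) = s l. Proof. exact/kvert_r/kd_s. Qed.

Lemma kcomp_nonvertex a b : s a = r b -> ~ vertex a -> ~ vertex (comp a b).
Proof. by rewrite /vertex => h ha; rewrite kcomp_d // => /dadd_eq0. Qed.

Lemma kfactor_uniq a b a' b' : s a = r b -> s a' = r b' -> d a = d a' ->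
  comp a b = comp a' b' -> a = a' /\ b = b'.
Proof.
move=> h h' da dc.
have dab : d (comp a b) = dadd (d a) (d b) by rewrite kcomp_d.
have db : d b = d b' by apply: (@daddI _ (d a)); rewrite -dab dc kcomp_d // da.
have [[x y] [_ uniq_xy]] := kfactor dab.
have E1 := uniq_xy (a, b) (And4 h erefl erefl erefl).
have E2 := uniq_xy (a', b') (And4 h' (esym da) (esym db) dc).
by rewrite E1 in E2; case: E2.
Qed.

(* [kprefix l m] and [ksuffix l m] are l(0, m) and l(m, d l); they are junk
   unless [dle m (d l)]. *)
Definition is_kfactor l m (ab : P * P) :=
  [/\ s ab.1 = r ab.2, d ab.1 = m & l = comp ab.1 ab.2].
Definition kfactor_pair l m := epsilon (inhabits (l, l)) (is_kfactor l m).
Definition kprefix l m := (kfactor_pair l m).1.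
Definition ksuffix l m := (kfactor_pair l m).2.

Lemma kfactor_spec l m : dle m (d l) ->
  [/\ s (kprefix l m) = r (ksuffix l m), d (kprefix l m) = m &
      l = comp (kprefix l m) (ksuffix l m)].
Proof.
move=> h; apply: (epsilon_spec (inhabits (l, l)) (is_kfactor l m)).
have [[x y] [[? ? ? ?] _]] := kfactor (esym (dadd_dsub h)).
by exists (x, y).
Qed.

Lemma kfactor_kcomp a b : s a = r b ->
  kprefix (comp a b) (d a) = a /\ ksuffix (comp a b) (d a) = b.
Proof.
move=> h; have dab : dle (d a) (d (comp a b)) by rewrite kcomp_d //; apply: dle_addr.
have [h1 h2 h3] := kfactor_spec dab.
by have [<- <-] := kfactor_uniq h h1 (esym h2) h3.
Qed.

Section Bounded.
Variables (l : P) (m : deg k).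
Hypothesis m_le : dle m (d l).

Lemma kprefix_d : d (kprefix l m) = m. Proof. by case: (kfactor_spec m_le). Qed.
Lemma kprefix_ksuffix : s (kprefix l m) = r (ksuffix l m). Proof. by case: (kfactor_spec m_le). Qed.
Lemma kcomp_kprefix_ksuffix : comp (kprefix l m) (ksuffix l m) = l.
Proof. by case: (kfactor_spec m_le). Qed.
Lemma kprefix_r : r (kprefix l m) = r l.
Proof. by rewrite -{2}kcomp_kprefix_ksuffix kcomp_r // kprefix_ksuffix. Qed.
Lemma ksuffix_s : s (ksuffix l m) = s l.
Proof. by rewrite -{2}kcomp_kprefix_ksuffix kcomp_s // kprefix_ksuffix. Qed.
Lemma ksuffix_d : d (ksuffix l m) = dsub (d l) m.
Proof. by rewrite -{2}kcomp_kprefix_ksuffix kcomp_d ?kprefix_ksuffix // kprefix_d dsub_dadd. Qed.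

Lemma kfactor_kcomp_ext l' : s l = r l' ->
  kprefix (comp l l') m = kprefix l m /\ ksuffix (comp l l') m = comp (ksuffix l m) l'.
Proof.
move=> h; have hs : s (kprefix l m) = r (comp (ksuffix l m) l').
  by rewrite kcomp_r ?ksuffix_s // kprefix_ksuffix.
have := kfactor_kcomp hs; rewrite -kcomp_assoc ?kprefix_ksuffix ?ksuffix_s //.
by rewrite kcomp_kprefix_ksuffix kprefix_d.
Qed.
End Bounded.

Lemma kprefix0 l : kprefix l (dzero k) = r l.
Proof. by have := kfactor_kcomp (ks_kr l); rewrite kcomp_idl kd_r; case. Qed.

Lemma kfactor_dadd l m n : dle (dadd m n) (d l) ->
  kprefix l (dadd m n) = comp (kprefix l m) (kprefix (ksuffix l m) n) /\
  ksuffix l (dadd m n) = ksuffix (ksuffix l m) n /\ dle n (d (ksuffix l m)).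
Proof.
move=> h.
have hm : dle m (d l) by apply: dle_trans h; apply: dle_addr.
have hn : dle n (d (ksuffix l m)) by rewrite ksuffix_d // => i; have := h i; rewrite !ffunE; lia.
have c1 : s (kprefix l m) = r (kprefix (ksuffix l m) n) by rewrite kprefix_r // kprefix_ksuffix.
have c2 : s (comp (kprefix l m) (kprefix (ksuffix l m) n)) = r (ksuffix (ksuffix l m) n).
  by rewrite kcomp_s // kprefix_ksuffix.
have := kfactor_kcomp c2.
rewrite kcomp_d // kprefix_d // kprefix_d // kcomp_assoc ?kprefix_ksuffix //.
  by rewrite (kcomp_kprefix_ksuffix hn) (kcomp_kprefix_ksuffix hm); case=> -> ->.
by rewrite kprefix_r.
Qed.

Definition ksubpath l m n := kprefix (ksuffix l m) (dsub n m).

Section Subpath.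
Variable l : P.

Lemma ksubpath_le m n : dle m n -> dle n (d l) -> dle (dsub n m) (d (ksuffix l m)).
Proof.
move=> h1 h2; rewrite ksuffix_d; last exact: dle_trans h2.
by move=> i; have := h1 i; have := h2 i; rewrite !ffunE; lia.
Qed.

Lemma ksubpath_d m n : dle m n -> dle n (d l) -> d (ksubpath l m n) = dsub n m.
Proof. by move=> h1 h2; rewrite /ksubpath kprefix_d //; apply: ksubpath_le. Qed.

Lemma ksubpath_r m n : dle m n -> dle n (d l) -> r (ksubpath l m n) = ksubpath l m m.
Proof. by move=> h1 h2; rewrite /ksubpath kprefix_r ?dsubnn ?kprefix0 //; apply: ksubpath_le. Qed.

Lemma ksubpath_comp m n q : dle m n -> dle n q -> dle q (d l) ->
  ksubpath l m q = comp (ksubpath l m n) (ksubpath l n q) /\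
  s (ksubpath l m n) = r (ksubpath l n q).
Proof.
move=> h1 h2 h3.
have hm : dle m (d l) by apply: dle_trans h3; apply: dle_trans h2.
have Eq : dsub q m = dadd (dsub n m) (dsub q n).
  by apply: deg_ext => i; have := h1 i; have := h2 i; rewrite !ffunE; lia.
have hle : dle (dadd (dsub n m) (dsub q n)) (d (ksuffix l m)).
  by rewrite -Eq; apply: ksubpath_le => //; apply: dle_trans h2.
have [e1 [e2 _]] := kfactor_dadd hle.
have hn : dle (dadd m (dsub n m)) (d l) by rewrite dadd_dsub //; apply: dle_trans h3.
have [_ [e3 _]] := kfactor_dadd hn.
rewrite dadd_dsub // in e3.
rewrite /ksubpath Eq e1 -e3; split=> //.
have hnm : dle (dsub n m) (d (ksuffix l m)) := ksubpath_le h1 (dle_trans h2 h3).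
by rewrite (kprefix_ksuffix hnm) (kprefix_r (ksubpath_le h2 h3)) e3.
Qed.

Lemma ksubpath_s m n : dle m n -> dle n (d l) -> s (ksubpath l m n) = ksubpath l n n.
Proof.
move=> h1 h2; have [_ ->] := ksubpath_comp h1 (dle_refl n) h2.
by rewrite /ksubpath dsubnn kprefix0 kr_kr.
Qed.

Lemma ksubpath_comp_ext l' m n : s l = r l' -> dle m n -> dle n (d l) ->
  ksubpath (comp l l') m n = ksubpath l m n.
Proof.
move=> h h1 h2; have hm : dle m (d l) by apply: dle_trans h2.
rewrite /ksubpath (kfactor_kcomp_ext hm h).2.
by rewrite (kfactor_kcomp_ext (ksubpath_le h1 h2) _).1 // ksuffix_s.
Qed.

Lemma segment_kprefix_ksuffix m e : dle (dadd m e) (d l) ->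
  segment l m (dadd m e) (kprefix (ksuffix l m) e).
Proof.
move=> hle; have hm : dle m (d l) by apply: dle_trans hle; apply: dle_addr.
have he : dle e (d (ksuffix l m)) by rewrite ksuffix_d // => i; have := hle i; rewrite !ffunE; lia.
exists (kprefix l m), (ksuffix (ksuffix l m) e); split.
- exact: kprefix_d.
- by rewrite kprefix_d // dsub_dadd.
- by rewrite (ksuffix_d he) (ksuffix_d hm); apply: deg_ext => i; rewrite !ffunE; lia.
- by rewrite (kprefix_ksuffix hm) (kprefix_r he).
- by rewrite (kprefix_ksuffix he) (kcomp_kprefix_ksuffix he) (kcomp_kprefix_ksuffix hm).
Qed.
End Subpath.

Lemma kcomp_kprefix_neq x y al m n e : s x = r al -> s y = r al ->
  dadd (d x) m = dadd (d y) n -> dle (dadd m e) (d al) -> dle (dadd n e) (d al) ->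
  kprefix (ksuffix al m) e <> kprefix (ksuffix al n) e ->
  comp x (kprefix al (dadd m e)) <> comp y (kprefix al (dadd n e)).
Proof.
move=> x_al y_al dxy le_m le_n seg_ne.
have [-> [_ le_em]] := kfactor_dadd le_m; have [-> [_ le_en]] := kfactor_dadd le_n.
have le_m' : dle m (d al) by apply: dle_trans le_m; apply: dle_addr.
have le_n' : dle n (d al) by apply: dle_trans le_n; apply: dle_addr.
have x_a : s x = r (kprefix al m) by rewrite kprefix_r.
have y_a : s y = r (kprefix al n) by rewrite kprefix_r.
have a_b : s (kprefix al m) = r (kprefix (ksuffix al m) e).
  by rewrite kprefix_r // kprefix_ksuffix.
have a_b' : s (kprefix al n) = r (kprefix (ksuffix al n) e).
  by rewrite kprefix_r // kprefix_ksuffix.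
rewrite -(kcomp_assoc x_a a_b) -(kcomp_assoc y_a a_b') => E.
have d_xa : d (comp x (kprefix al m)) = d (comp y (kprefix al n)).
  by rewrite !kcomp_d // !kprefix_d.
have xa_b : s (comp x (kprefix al m)) = r (kprefix (ksuffix al m) e) by rewrite kcomp_s.
have ya_b' : s (comp y (kprefix al n)) = r (kprefix (ksuffix al n) e) by rewrite kcomp_s.
by have [_ /seg_ne] := kfactor_uniq xa_b ya_b' d_xa E.
Qed.

Section Chain.
(* [chain N] is the path of degree (N,...,N) traced by following [step] from
   [start]; [chain_path] is the infinite path x(m, n) = (chain N)(m, n), for
   any N with n <= (N,...,N). *)
Variables (step : P -> P) (start : P).
Hypothesis start_vertex : vertex start.

Fixpoint chain_vertex N := if N is N'.+1 then s (step (chain_vertex N')) else start.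
Fixpoint chain N := if N is N'.+1 then comp (chain N') (step (chain_vertex N')) else start.

Hypothesis step_edge :
  forall N, r (step (chain_vertex N)) = chain_vertex N /\ d (step (chain_vertex N)) = ones.

Lemma chain_s N : s (chain N) = chain_vertex N.
Proof.
elim: N => [|N IH] /=; first exact: kvert_s.
by rewrite kcomp_s // IH (step_edge N).1.
Qed.

Lemma chain_d N : d (chain N) = dconst k N.
Proof.
elim: N => [|N IH] /=; first by rewrite start_vertex; apply: deg_ext => i; rewrite !ffunE.
rewrite kcomp_d ?chain_s ?(step_edge N).1 // IH (step_edge N).2.
by apply: deg_ext => i; rewrite !ffunE addn1.
Qed.

Lemma chain_extend N j : exists t, s (chain N) = r t /\ chain (N + j) = comp (chain N) t.
Proof.
elim: j => [|j [t [h1 h2]]]; first by exists (s (chain N)); rewrite kr_ks addn0 kcomp_idr.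
have ht : s t = r (step (chain_vertex (N + j))).
  by rewrite (step_edge _).1 -chain_s h2 kcomp_s.
exists (comp t (step (chain_vertex (N + j)))); rewrite kcomp_r //; split=> //.
by rewrite addnS /= h2 kcomp_assoc.
Qed.

Lemma ksubpath_chain N N' m q : dle m q -> dle q (dconst k N) -> (N <= N')%N ->
  ksubpath (chain N') m q = ksubpath (chain N) m q.
Proof.
move=> h1 h2 hN; rewrite -(subnKC hN).
have [t [e1 ->]] := chain_extend N (N' - N).
by rewrite ksubpath_comp_ext // chain_d.
Qed.

Definition chain_path m q := ksubpath (chain (dmax q)) m q.

Lemma chain_pathE m q N : dle m q -> dle q (dconst k N) ->
  chain_path m q = ksubpath (chain N) m q.
Proof.
move=> h1 h2; rewrite /chain_path.
rewrite -(@ksubpath_chain (dmax q) (maxn N (dmax q)) m q h1 (dle_dmax q) (leq_maxr _ _)).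
by rewrite (@ksubpath_chain N (maxn N (dmax q)) m q h1 h2 (leq_maxl _ _)).
Qed.

Lemma chain_path_infinite : infinite_path chain_path.
Proof.
have chain_dmax q : dle q (d (chain (dmax q))) by rewrite chain_d; apply: dle_dmax.
split.
- by move=> m n h; rewrite /chain_path ksubpath_d.
- move=> m n h; have hm : dle m (dconst k (dmax n)) by apply: dle_trans h (dle_dmax n).
  rewrite (chain_pathE (dle_refl m) hm) /chain_path.
  by rewrite ksubpath_r ?ksubpath_s ?chain_dmax.
- move=> m n q h1 h2; have hn : dle n (dconst k (dmax q)) by apply: dle_trans h2 (dle_dmax q).
  rewrite (chain_pathE (dle_trans h1 h2) (dle_dmax q)) (chain_pathE h1 hn).
  by rewrite (chain_pathE h2 (dle_dmax q)) (ksubpath_comp h1 h2 (chain_dmax q)).1.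
Qed.

Lemma chain_path_vertex m : chain_path m m = r (ksuffix (chain (dmax m)) m).
Proof. by rewrite /chain_path /ksubpath dsubnn kprefix0. Qed.
End Chain.

(* If H failed at u, saturation would let us follow (1,...,1)-edges from u
   forever while avoiding H; cofinality connects w to that infinite path, and
   heredity carries H along the connection. *)
Lemma cofinal_vertex_ind (H : P -> Prop) :
  cofinal G -> (exists2 w, vertex w & H w) -> (forall l, H (r l) -> H (s l)) ->
  (forall u, vertex u -> (forall l, r l = u -> d l = ones -> H (s l)) -> H u) ->
  forall u, vertex u -> H u.
Proof.
move=> cof [w vw Hw] H_s H_sat u vu; apply: NNPP => nHu.
pose bad_edge x l := [/\ r l = x, d l = ones & ~ H (s l)].
pose step x := epsilon (inhabits x) (bad_edge x).
have step_bad x : vertex x -> ~ H x -> bad_edge x (step x).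
  move=> vx nHx; apply: epsilon_spec; apply: NNPP => none; apply/nHx/H_sat => // l hr hd.
  by apply: NNPP => nH; apply: none; exists l.
have chain_bad N : vertex (chain_vertex step u N) /\ ~ H (chain_vertex step u N).
  elim: N => [|N [vN nHN]] //=; split; first exact: vertex_s.
  by case: (step_bad _ vN nHN).
have step_edge N : r (step (chain_vertex step u N)) = chain_vertex step u N /\
    d (step (chain_vertex step u N)) = ones.
  by have [vN nHN] := chain_bad N; case: (step_bad _ vN nHN).
have [m [l [lw ls]]] := cof _ (chain_path_infinite vu step_edge) w vw.
pose L := chain step u (dmax m).
have hm : dle m (d L) by rewrite chain_d //; apply: dle_dmax.
have : H (s (ksuffix L m)) by apply/H_s; rewrite -chain_path_vertex -ls; apply/H_s; rewrite lw.
by rewrite (ksuffix_s hm) (chain_s vu step_edge); apply: (chain_bad _).2.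
Qed.

End Factorisation.

Local Open Scope ring_scope.

Section NUAlgebra.
Variables (R : comPzRingType) (A : nualg R).
Local Notation mul := (nua_mul A).

Lemma nua_mul0l a : mul 0 a = 0.
Proof. by apply: (addrI (mul 0 a)); rewrite -nua_mulDl !addr0. Qed.

Lemma nua_mul0r a : mul a 0 = 0.
Proof. by apply: (addrI (mul a 0)); rewrite -nua_mulDr !addr0. Qed.

Lemma nua_mul_suml (I : Type) (sq : seq I) (F : I -> A) b :
  mul (\sum_(i <- sq) F i) b = \sum_(i <- sq) mul (F i) b.
Proof.
elim: sq => [|x sq IH]; first by rewrite !big_nil nua_mul0l.
by rewrite !big_cons nua_mulDl IH.
Qed.

Lemma nua_mul_sumr (I : Type) (sq : seq I) (F : I -> A) b :
  mul b (\sum_(i <- sq) F i) = \sum_(i <- sq) mul b (F i).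
Proof.
elim: sq => [|x sq IH]; first by rewrite !big_nil nua_mul0r.
by rewrite !big_cons nua_mulDr IH.
Qed.
End NUAlgebra.

Section KPFamily.
Variables (k : nat) (R : comPzRingType) (G : kgraph k) (A : nualg R).
Variables (p S Sstar : kpath G -> A).
Local Notation P := (kpath G).
Local Notation d := (@kd k G).
Local Notation r := (@kr k G).
Local Notation s := (@ks k G).
Local Notation comp := (@kcomp k G).
Local Notation mul := (nua_mul A).
Local Notation ones := (dconst k 1).
Hypothesis fam : KP_family p S Sstar.
Implicit Types l m : P.

Lemma p_mul v w : vertex v -> vertex w -> mul (p v) (p w) = if v == w then p v else 0.
Proof. by case: fam => pvw *; apply: pvw. Qed.

Lemma p_idem v : vertex v -> mul (p v) (p v) = p v.
Proof. by move=> vv; rewrite p_mul // eqxx. Qed.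

Lemma p_orth v w : vertex v -> vertex w -> v <> w -> mul (p v) (p w) = 0.
Proof. by move=> vv vw /eqP/negPf vw'; rewrite p_mul // vw'. Qed.

Definition Sx l := if d l == dzero k then p l else S l.
Definition Sxstar l := if d l == dzero k then p l else Sstar l.

Lemma Sx_vertex l : vertex l -> Sx l = p l.
Proof. by rewrite /Sx /vertex => ->; rewrite eqxx. Qed.
Lemma Sxstar_vertex l : vertex l -> Sxstar l = p l.
Proof. by rewrite /Sxstar /vertex => ->; rewrite eqxx. Qed.
Lemma Sx_nonvertex l : ~ vertex l -> Sx l = S l.
Proof. by rewrite /Sx /vertex; case: eqP. Qed.
Lemma Sxstar_nonvertex l : ~ vertex l -> Sxstar l = Sstar l.
Proof. by rewrite /Sxstar /vertex; case: eqP. Qed.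

Lemma vertex_dec l : vertex l \/ ~ vertex l.
Proof. by rewrite /vertex; case: (d l =P dzero k); [left | right]. Qed.

Lemma KP2_nonvertex l : ~ vertex l ->
  [/\ mul (p (r l)) (S l) = S l, mul (S l) (p (s l)) = S l,
      mul (p (s l)) (Sstar l) = Sstar l & mul (Sstar l) (p (r l)) = Sstar l].
Proof. by case: fam => _ _ h _ _; apply: h. Qed.

Lemma Sx_r l : mul (p (r l)) (Sx l) = Sx l.
Proof.
case: (vertex_dec l) => vl; first by rewrite Sx_vertex // kvert_r // p_idem.
by rewrite Sx_nonvertex //; case: (KP2_nonvertex vl).
Qed.

Lemma Sx_s l : mul (Sx l) (p (s l)) = Sx l.
Proof.
case: (vertex_dec l) => vl; first by rewrite Sx_vertex // kvert_s // p_idem.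
by rewrite Sx_nonvertex //; case: (KP2_nonvertex vl).
Qed.

Lemma Sxstar_s l : mul (p (s l)) (Sxstar l) = Sxstar l.
Proof.
case: (vertex_dec l) => vl; first by rewrite Sxstar_vertex // kvert_s // p_idem.
by rewrite Sxstar_nonvertex //; case: (KP2_nonvertex vl).
Qed.

Lemma Sxstar_r l : mul (Sxstar l) (p (r l)) = Sxstar l.
Proof.
case: (vertex_dec l) => vl; first by rewrite Sxstar_vertex // kvert_r // p_idem.
by rewrite Sxstar_nonvertex //; case: (KP2_nonvertex vl).
Qed.

Lemma Sx_comp a b : s a = r b -> mul (Sx a) (Sx b) = Sx (comp a b).
Proof.
move=> ab; case: (vertex_dec a) => va.
  have -> : a = r b by rewrite -ab kvert_s.
  by rewrite (Sx_vertex (vertex_r b)) Sx_r kcomp_idl.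
case: (vertex_dec b) => vb.
  have -> : b = s a by rewrite ab kvert_r.
  by rewrite (Sx_vertex (vertex_s a)) Sx_s kcomp_idr.
rewrite !Sx_nonvertex //; last exact: kcomp_nonvertex.
by case: fam => _ KP2 _ _ _; case: (KP2 a b va vb (esym ab)).
Qed.

Lemma Sxstar_comp a b : s a = r b -> mul (Sxstar b) (Sxstar a) = Sxstar (comp a b).
Proof.
move=> ab; case: (vertex_dec a) => va.
  have -> : a = r b by rewrite -ab kvert_s.
  by rewrite (Sxstar_vertex (vertex_r b)) Sxstar_r kcomp_idl.
case: (vertex_dec b) => vb.
  have -> : b = s a by rewrite ab kvert_r.
  by rewrite (Sxstar_vertex (vertex_s a)) Sxstar_s kcomp_idr.
rewrite !Sxstar_nonvertex //; last exact: kcomp_nonvertex.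
by case: fam => _ KP2 _ _ _; case: (KP2 a b va vb (esym ab)).
Qed.

Lemma Sxstar_Sx a b : d a = d b -> mul (Sxstar a) (Sx b) = if a == b then p (s a) else 0.
Proof.
move=> dab; case: (vertex_dec a) => va.
  have vb : vertex b by rewrite /vertex -dab.
  by rewrite Sxstar_vertex // Sx_vertex // p_mul // kvert_s.
have vb : ~ vertex b by rewrite /vertex -dab.
rewrite Sxstar_nonvertex // Sx_nonvertex //.
by case: fam => _ _ _ KP3 _; apply: KP3.
Qed.

Lemma Sxstar_Sx_comp u v u' v' : s u = r v -> s u' = r v' ->
  mul (Sxstar (comp u v)) (Sx (comp u' v')) =
  mul (Sxstar v) (mul (mul (Sxstar u) (Sx u')) (Sx v')).
Proof. by move=> uv uv'; rewrite -Sxstar_comp // -Sx_comp // -!nua_mulA. Qed.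

Lemma Sxstar_Sx_short rho l : dle (d l) (d rho) ->
  mul (Sxstar rho) (Sx l) =
  if kprefix rho (d l) == l then Sxstar (ksuffix rho (d l)) else 0.
Proof.
move=> hle; rewrite -{1}(kcomp_kprefix_ksuffix hle) -Sxstar_comp ?kprefix_ksuffix //.
rewrite -nua_mulA Sxstar_Sx ?kprefix_d //.
by case: eqP => _; [rewrite kprefix_ksuffix // Sxstar_r | rewrite nua_mul0r].
Qed.

Lemma Sxstar_short_Sx rho l : dle (d l) (d rho) ->
  mul (Sxstar l) (Sx rho) =
  if kprefix rho (d l) == l then Sx (ksuffix rho (d l)) else 0.
Proof.
move=> hle; rewrite -{1}(kcomp_kprefix_ksuffix hle) -Sx_comp ?kprefix_ksuffix //.
rewrite nua_mulA Sxstar_Sx ?kprefix_d // [l == _]eq_sym.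
by case: eqP => [e|_]; [rewrite -{1}e kprefix_ksuffix // Sx_r | rewrite nua_mul0l].
Qed.

Lemma Sx_Sx_eq0 l m : s l <> r m -> mul (Sx l) (Sx m) = 0.
Proof.
move=> lm; rewrite -Sx_s -(Sx_r m) nua_mulA -(nua_mulA (Sx l)).
by rewrite p_orth ?nua_mul0r ?nua_mul0l //; [apply: vertex_s | apply: vertex_r].
Qed.

Lemma Sxstar_Sxstar_eq0 l m : s m <> r l -> mul (Sxstar l) (Sxstar m) = 0.
Proof.
move=> ml; rewrite -Sxstar_r -(Sxstar_s m) nua_mulA -(nua_mulA (Sxstar l)).
by rewrite p_orth ?nua_mul0r ?nua_mul0l //; [apply: vertex_r | apply: vertex_s | move/esym].
Qed.

Lemma Sxstar_Sx_eq0 l m : r l <> r m -> mul (Sxstar l) (Sx m) = 0.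
Proof.
move=> lm; rewrite -Sxstar_r -(Sx_r m) nua_mulA -(nua_mulA (Sxstar l)).
by rewrite p_orth ?nua_mul0r ?nua_mul0l //; apply: vertex_r.
Qed.

Lemma paths_enum v n : row_finite G -> vertex v ->
  exists2 sq, uniq sq & forall l, l \in sq <-> (r l = v /\ d l = n).
Proof.
move=> rowfin vv; have [sq0 sq0P] := rowfin v n vv.
exists (undup [seq l <- sq0 | (r l == v) && (d l == n)]); first exact: undup_uniq.
move=> l; rewrite mem_undup mem_filter; split; first by case/andP => /andP [/eqP -> /eqP ->].
by case=> lv ln; rewrite lv ln !eqxx /=; apply: sq0P.
Qed.

Lemma KP4_Sx v n sq : vertex v -> n <> dzero k -> uniq sq ->
  (forall l, l \in sq <-> (r l = v /\ d l = n)) ->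
  p v = \sum_(l <- sq) mul (Sx l) (Sxstar l).
Proof.
move=> vv n0 sq_uniq sqP; case: fam => _ _ _ _ KP4; rewrite (KP4 v n vv n0 sq sq_uniq sqP).
apply: eq_big_seq => l /sqP [_ dl].
by rewrite Sx_nonvertex ?Sxstar_nonvertex // /vertex dl.
Qed.

Definition vsum (F : seq P) := \sum_(u <- F) p u.
Definition vertex_seq (F : seq P) := uniq F /\ forall u, u \in F -> vertex u.
Definition local_unit (F : seq P) (a : A) := mul (vsum F) a = a /\ mul a (vsum F) = a.

Section VertexSum.
Variable F : seq P.
Hypothesis F_vertex : vertex_seq F.

Lemma vsum_p u : u \in F -> mul (vsum F) (p u) = p u /\ mul (p u) (vsum F) = p u.
Proof.
have [F_uniq vF] := F_vertex; move=> uF; rewrite /vsum nua_mul_suml nua_mul_sumr.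
by split; rewrite (bigD1_seq u) //= (p_idem (vF u uF)) big1_seq ?addr0 //
  => w /andP [/eqP wu wF]; apply: p_orth => //; by [apply: vF | move/esym].
Qed.

Lemma p_vsum_notin v : vertex v -> v \notin F -> mul (p v) (vsum F) = 0.
Proof.
move=> vv vF; rewrite /vsum nua_mul_sumr big1_seq // => w /andP [_ wF].
by apply: p_orth => //; [apply: F_vertex.2 | move=> vw; rewrite vw wF in vF].
Qed.

End VertexSum.

Lemma local_unit_sub F F' a : vertex_seq F' -> {subset F <= F'} ->
  local_unit F a -> local_unit F' a.
Proof.
move=> F'_vertex FF' [Fa aF]; have vsum_FF' : mul (vsum F') (vsum F) = vsum F /\
    mul (vsum F) (vsum F') = vsum F.
  rewrite {2 4}/vsum nua_mul_sumr nua_mul_suml; split; apply: eq_big_seq => u uF.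
    by case: (vsum_p F'_vertex (FF' u uF)).
  by case: (vsum_p F'_vertex (FF' u uF)).
by split; [rewrite -Fa nua_mulA vsum_FF'.1 | rewrite -aF -nua_mulA vsum_FF'.2].
Qed.

Lemma vertex_seq_undup_cat F F' : vertex_seq F -> vertex_seq F' -> vertex_seq (undup (F ++ F')).
Proof.
move=> [_ vF] [_ vF']; split; first exact: undup_uniq.
by move=> u; rewrite mem_undup mem_cat => /orP [/vF | /vF'].
Qed.

Lemma local_unit_merge F F' a b : vertex_seq F -> vertex_seq F' ->
  local_unit F a -> local_unit F' b ->
  local_unit (undup (F ++ F')) a /\ local_unit (undup (F ++ F')) b.
Proof.
move=> vF vF' Fa F'b; have vFF' := vertex_seq_undup_cat vF vF'.
split; [apply: local_unit_sub Fa | apply: local_unit_sub F'b] => // u uF;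
  by rewrite mem_undup mem_cat uF ?orbT.
Qed.

Lemma local_unit_of_vertices u w a : vertex u -> vertex w ->
  mul (p u) a = a -> mul a (p w) = a -> exists2 F, vertex_seq F & local_unit F a.
Proof.
move=> vu vw ua aw; have vF : vertex_seq (undup [:: u; w]).
  by split=> [|x]; rewrite ?undup_uniq // mem_undup !inE => /orP [] /eqP ->.
exists (undup [:: u; w]) => //; split.
  by rewrite -ua nua_mulA (vsum_p vF _).1 // mem_undup mem_head.
by rewrite -aw -nua_mulA (vsum_p vF _).2 // mem_undup !inE eqxx orbT.
Qed.

Lemma exists_local_unit : KP_generated p S Sstar ->
  forall a, exists2 F, vertex_seq F & local_unit F a.
Proof.
move=> gen; apply: gen.
- by move=> v vv; apply: (local_unit_of_vertices vv vv); apply: p_idem.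
- move=> l nvl; have [rS Ss sS Sr] := KP2_nonvertex nvl.
  split; first exact: (local_unit_of_vertices (vertex_r l) (vertex_s l)).
  exact: (local_unit_of_vertices (vertex_s l) (vertex_r l)).
- by exists [::] => //; rewrite /local_unit nua_mul0l nua_mul0r.
- move=> a b [F vF Fa] [F' vF' F'b]; have [[a1 a2] [b1 b2]] := local_unit_merge vF vF' Fa F'b.
  exists (undup (F ++ F')); first exact: vertex_seq_undup_cat.
  by split; rewrite ?nua_mulDr ?nua_mulDl ?a1 ?a2 ?b1 ?b2.
- move=> x a [F vF [Fa aF]]; exists F => //.
  by split; rewrite ?nua_mulZr ?nua_mulZl ?Fa ?aF.
- move=> a b [F vF Fa] [F' vF' F'b]; have [[a1 _] [_ b2]] := local_unit_merge vF vF' Fa F'b.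
  exists (undup (F ++ F')); first exact: vertex_seq_undup_cat.
  by split; [rewrite nua_mulA a1 | rewrite -nua_mulA b2].
Qed.

Lemma vsum_mul_scalar F z (c : R) : (forall u, u \in F -> mul (p u) z = c *: p u) ->
  mul (vsum F) z = c *: vsum F.
Proof.
by move=> Fz; rewrite /vsum nua_mul_suml scaler_sumr; apply: eq_big_seq.
Qed.

Inductive kp_span : A -> Prop :=
| kp_span0 : kp_span 0
| kp_span_monomial l m : kp_span (mul (Sx l) (Sxstar m))
| kp_spanD a b : kp_span a -> kp_span b -> kp_span (a + b)
| kp_spanZ (x : R) a : kp_span a -> kp_span (x *: a).

Lemma kp_span_sum (sq : seq P) (F : P -> A) :
  (forall l, l \in sq -> kp_span (F l)) -> kp_span (\sum_(l <- sq) F l).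
Proof.
elim: sq => [|x sq IH] h; first by rewrite big_nil; apply: kp_span0.
rewrite big_cons; apply: kp_spanD; first by apply: h; rewrite mem_head.
by apply: IH => l hl; apply: h; rewrite in_cons hl orbT.
Qed.

Lemma kp_span_Sx_mul l a : kp_span a -> kp_span (mul (Sx l) a).
Proof.
elim=> [|g e|a1 a2 _ IH1 _ IH2|x a1 _ IH].
- by rewrite nua_mul0r; apply: kp_span0.
- rewrite nua_mulA; case: (s l =P r g) => lg.
    by rewrite Sx_comp //; apply: kp_span_monomial.
  by rewrite Sx_Sx_eq0 // nua_mul0l; apply: kp_span0.
- by rewrite nua_mulDr; apply: kp_spanD.
- by rewrite nua_mulZr; apply: kp_spanZ.
Qed.

Lemma kp_span_mul_Sxstar m a : kp_span a -> kp_span (mul a (Sxstar m)).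
Proof.
elim=> [|g e|a1 a2 _ IH1 _ IH2|x a1 _ IH].
- by rewrite nua_mul0l; apply: kp_span0.
- rewrite -nua_mulA; case: (s m =P r e) => me.
    by rewrite Sxstar_comp //; apply: kp_span_monomial.
  by rewrite Sxstar_Sxstar_eq0 // nua_mul0r; apply: kp_span0.
- by rewrite nua_mulDl; apply: kp_spanD.
- by rewrite nua_mulZl; apply: kp_spanZ.
Qed.

Hypothesis rowfin : row_finite G.

(* Insert p (r mu) = sum of s_rho s_rho* over r(mu) Lambda^N, N = d mu \/ d al;
   each term s_mu* s_rho s_rho* s_al is then a monomial or zero. *)
Lemma kp_span_Sxstar_Sx mu al : kp_span (mul (Sxstar mu) (Sx al)).
Proof.
case: (r mu =P r al) => [r_eq|r_neq]; last by rewrite Sxstar_Sx_eq0 //; apply: kp_span0.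
set N := djoin (d mu) (d al).
case: (N =P dzero k) => [N0|N_neq0].
  have vertex_le l : dle (d l) N -> vertex l.
    by move=> hl; apply: deg_ext => i; have := hl i; rewrite N0 !ffunE; lia.
  have v_mu := vertex_le mu (dle_joinl _ _).
  have -> : al = mu by rewrite -(kvert_r (vertex_le al (dle_joinr _ _))) -r_eq kvert_r.
  rewrite (Sxstar_vertex v_mu) (Sx_vertex v_mu) -{1}(Sx_vertex v_mu) -(Sxstar_vertex v_mu).
  exact: kp_span_monomial.
have vr_mu : vertex (r mu) by apply: vertex_r.
have [sq sq_uniq sqP] := paths_enum N rowfin vr_mu.
rewrite -Sxstar_r // (KP4_Sx vr_mu N_neq0 sq_uniq sqP) nua_mul_sumr nua_mul_suml.
apply: kp_span_sum => rho /sqP [_ d_rho].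
rewrite !nua_mulA -(nua_mulA _ (Sxstar rho)).
have mu_le : dle (d mu) (d rho) by rewrite d_rho; apply: dle_joinl.
have al_le : dle (d al) (d rho) by rewrite d_rho; apply: dle_joinr.
rewrite (Sxstar_short_Sx mu_le) (Sxstar_Sx_short al_le).
case: eqP => _; last by rewrite nua_mul0l; apply: kp_span0.
by case: eqP => _; [apply: kp_span_monomial | rewrite nua_mul0r; apply: kp_span0].
Qed.

Lemma kp_span_mul a b : kp_span a -> kp_span b -> kp_span (mul a b).
Proof.
move=> span_a span_b; elim: span_a => [|l m|a1 a2 _ IH1 _ IH2|x a1 _ IH].
- by rewrite nua_mul0l; apply: kp_span0.
- rewrite -nua_mulA; apply: kp_span_Sx_mul.
  elim: span_b => [|g e|b1 b2 _ IH1 _ IH2|x b1 _ IH].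
  + by rewrite nua_mul0r; apply: kp_span0.
  + by rewrite nua_mulA; apply/kp_span_mul_Sxstar/kp_span_Sxstar_Sx.
  + by rewrite nua_mulDr; apply: kp_spanD.
  + by rewrite nua_mulZr; apply: kp_spanZ.
- by rewrite nua_mulDl; apply: kp_spanD.
- by rewrite nua_mulZl; apply: kp_spanZ.
Qed.

Lemma kp_span_generated : KP_generated p S Sstar -> forall a, kp_span a.
Proof.
move=> gen; apply: gen.
- move=> v vv; rewrite -(p_idem vv) -{1}(Sx_vertex vv) -(Sxstar_vertex vv).
  exact: kp_span_monomial.
- move=> l l_nv; have [_ S_s S_s' _] := KP2_nonvertex l_nv; split.
    have := kp_span_monomial l (s l).
    by rewrite Sx_nonvertex // (Sxstar_vertex (vertex_s l)) S_s.
  have := kp_span_monomial (s l) l.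
  by rewrite Sxstar_nonvertex // (Sx_vertex (vertex_s l)) S_s'.
- exact: kp_span0.
- by move=> *; apply: kp_spanD.
- by move=> *; apply: kp_spanZ.
- by move=> *; apply: kp_span_mul.
Qed.

Lemma Sxstar_Sx_ext_neq u v u' v' : s u = r v -> s u' = r v' -> d u = d u' -> u <> u' ->
  mul (Sxstar (comp u v)) (Sx (comp u' v')) = 0.
Proof.
move=> uv uv' duu' /eqP/negPf neq.
by rewrite Sxstar_Sx_comp // Sxstar_Sx // neq nua_mul0l nua_mul0r.
Qed.

Lemma Sxstar_Sx_ext_eq0 u u' v : s u = r v -> s u' = r v ->
  mul (Sxstar u) (Sx u') = 0 -> mul (Sxstar (comp u v)) (Sx (comp u' v)) = 0.
Proof. by move=> uv u'v uu'0; rewrite Sxstar_Sx_comp // uu'0 nua_mul0l nua_mul0r. Qed.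

Hypothesis aper : aperiodic G.

(* Aperiodicity at s x, applied to the degrees d y and d x, yields al whose
   segments al(d y, d y + e) and al(d x, d x + e) differ; hence x al and y al
   already differ in their initial parts of the common degree d x + d y + e. *)
Lemma aperiodic_orthogonal_extension x y : s x = s y -> d x <> d y ->
  exists2 al, r al = s x & mul (Sxstar (comp x al)) (Sx (comp y al)) = 0.
Proof.
move=> sxy dxy; have [al [r_al le_al seg_neq]] := aper (vertex_s x) (nesym dxy).
exists al => //.
set e := dsub (d al) (djoin (d y) (d x)) in seg_neq.
have le_y : dle (dadd (d y) e) (d al).
  by move=> i; have := le_al i; rewrite !ffunE; lia.
have le_x : dle (dadd (d x) e) (d al).
  by move=> i; have := le_al i; rewrite !ffunE; lia.
have seg_ne := seg_neq _ _ (segment_kprefix_ksuffix le_y) (segment_kprefix_ksuffix le_x).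
have x_u : s x = r (kprefix al (dadd (d y) e)) by rewrite kprefix_r // r_al.
have y_u' : s y = r (kprefix al (dadd (d x) e)) by rewrite kprefix_r // r_al sxy.
have u_c := kprefix_ksuffix le_y; have u'_c := kprefix_ksuffix le_x.
have split_x : comp x al =
    comp (comp x (kprefix al (dadd (d y) e))) (ksuffix al (dadd (d y) e)).
  by rewrite kcomp_assoc // kcomp_kprefix_ksuffix.
have split_y : comp y al =
    comp (comp y (kprefix al (dadd (d x) e))) (ksuffix al (dadd (d x) e)).
  by rewrite kcomp_assoc // kcomp_kprefix_ksuffix.
have dxy_sym : dadd (d x) (d y) = dadd (d y) (d x).
  by apply: deg_ext => i; rewrite !ffunE addnC.
rewrite split_x split_y; apply: Sxstar_Sx_ext_neq; rewrite ?kcomp_s //.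
  rewrite !kcomp_d // !kprefix_d //.
  by apply: deg_ext => i; rewrite !ffunE; lia.
by apply: (kcomp_kprefix_neq _ _ dxy_sym le_y le_x seg_ne); rewrite r_al ?sxy.
Qed.

Definition compressible (a : A) := forall g, exists2 al, r al = s g & exists c : R,
  forall be, r be = s al ->
    mul (Sxstar (comp (comp g al) be)) (mul a (Sx (comp (comp g al) be))) = c *: p (s be).

Lemma compressible0 : compressible 0.
Proof.
move=> g; exists (s g); first exact: kr_ks.
by exists 0 => be _; rewrite nua_mul0l nua_mul0r scale0r.
Qed.

Lemma compressibleZ (x : R) a : compressible a -> compressible (x *: a).
Proof.
move=> ca g; have [al r_al [c al_c]] := ca g.
exists al => //; exists (x * c) => be r_be.
by rewrite nua_mulZl nua_mulZr al_c // scalerA.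
Qed.

Lemma compressibleD a b : compressible a -> compressible b -> compressible (a + b).
Proof.
move=> ca cb g; have [a1 r_a1 [c1 a1_c1]] := ca g.
have [a2 r_a2 [c2 a2_c2]] := cb (comp g a1).
rewrite kcomp_s // in r_a2.
exists (comp a1 a2); first by rewrite kcomp_r.
exists (c1 + c2) => be r_be; rewrite kcomp_s // in r_be.
have E1 : comp (comp g (comp a1 a2)) be = comp (comp g a1) (comp a2 be).
  by rewrite -!kcomp_assoc ?kcomp_s.
have E2 : comp (comp g (comp a1 a2)) be = comp (comp (comp g a1) a2) be.
  by rewrite -kcomp_assoc.
rewrite nua_mulDl nua_mulDr {1 2}E1 a1_c1 ?kcomp_r // E2 a2_c2 // kcomp_s //.
by rewrite scalerDl.
Qed.

Lemma Sxstar_monomial_Sx g l m t : dle (d l) (d g) -> dle (d m) (d g) -> s g = r t ->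
  mul (Sxstar (comp g t)) (mul (mul (Sx l) (Sxstar m)) (Sx (comp g t))) =
  if (kprefix g (d l) == l) && (kprefix g (d m) == m) then
    mul (Sxstar (comp (ksuffix g (d l)) t)) (Sx (comp (ksuffix g (d m)) t)) else 0.
Proof.
move=> le_l le_m gt.
have le_lt : dle (d l) (d (comp g t)) by rewrite kcomp_d //; apply: dle_trans le_l (dle_addr _ _).
have le_mt : dle (d m) (d (comp g t)) by rewrite kcomp_d //; apply: dle_trans le_m (dle_addr _ _).
rewrite -nua_mulA nua_mulA Sxstar_Sx_short // Sxstar_short_Sx //.
have [-> ->] := kfactor_kcomp_ext le_l gt; have [-> ->] := kfactor_kcomp_ext le_m gt.
case: eqP => _; last by rewrite nua_mul0l.
by case: eqP => _; rewrite ?nua_mul0r.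
Qed.

Hypothesis nosrc : no_sources G.

Lemma compressible_monomial l m : compressible (mul (Sx l) (Sxstar m)).
Proof.
move=> g; have [a0 [r_a0 d_a0]] := nosrc (djoin (d l) (d m)) (vertex_s g).
set g' := comp g a0.
have le_g' : dle (djoin (d l) (d m)) (d g').
  by rewrite kcomp_d // d_a0 => i; rewrite !ffunE; lia.
have le_l := dle_trans (dle_joinl _ _) le_g'.
have le_m := dle_trans (dle_joinr _ _) le_g'.
have s_g' : s g' = s a0 by rewrite kcomp_s.
have s_xy : s (ksuffix g' (d l)) = s (ksuffix g' (d m)) by rewrite !ksuffix_s.
case: (d l =P d m) => [dlm | dlm].
  exists a0 => //; exists (if (kprefix g' (d l) == l) && (kprefix g' (d m) == m) then 1 else 0).
  move=> be r_be; rewrite Sxstar_monomial_Sx ?s_g' //.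
  case: ifP => _; last by rewrite scale0r.
  by rewrite -dlm Sxstar_Sx // eqxx kcomp_s ?ksuffix_s ?s_g' // scale1r.
have dxy : d (ksuffix g' (d l)) <> d (ksuffix g' (d m)).
  rewrite !ksuffix_d // => /(congr1 (fun f : deg k => dadd f (djoin (d l) (d m)))) E.
  apply: dlm; apply: deg_ext => i; have := congr1 (fun f : deg k => f i) E.
  by have := le_l i; have := le_m i; rewrite !ffunE; lia.
have [a1 r_a1 xy0] := aperiodic_orthogonal_extension s_xy dxy.
rewrite ksuffix_s // s_g' in r_a1.
exists (comp a0 a1); first by rewrite kcomp_r.
exists 0 => be r_be; rewrite scale0r; rewrite kcomp_s // in r_be.
have -> : comp (comp g (comp a0 a1)) be = comp g' (comp a1 be).
  by rewrite -!kcomp_assoc ?kcomp_s.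
rewrite Sxstar_monomial_Sx ?kcomp_r ?s_g' //; case: ifP => // _.
have x_a1 : s (ksuffix g' (d l)) = r a1 by rewrite ksuffix_s // s_g'.
have y_a1 : s (ksuffix g' (d m)) = r a1 by rewrite -s_xy.
rewrite -(kcomp_assoc x_a1 (esym r_be)) -(kcomp_assoc y_a1 (esym r_be)).
by apply: (Sxstar_Sx_ext_eq0 _ _ xy0); rewrite kcomp_s.
Qed.

Lemma compressible_generated : KP_generated p S Sstar -> forall a, compressible a.
Proof.
move=> gen a; elim: (kp_span_generated gen a).
- exact: compressible0.
- exact: compressible_monomial.
- by move=> *; apply: compressibleD.
- by move=> *; apply: compressibleZ.
Qed.

Section Central.
Variables (z : A) (c : R).
Hypothesis z_central : central z.

(* p_{s l} z = s_l* s_l z = s_l* z s_l, and z s_l = z p_{r l} s_l = c s_l. *)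
Lemma central_scalar_s l : mul (p (r l)) z = c *: p (r l) -> mul (p (s l)) z = c *: p (s l).
Proof.
move=> rz; have p_s : p (s l) = mul (Sxstar l) (Sx l) by rewrite Sxstar_Sx // eqxx.
have z_Sx : mul z (Sx l) = c *: Sx l by rewrite -{1}Sx_r nua_mulA z_central rz nua_mulZl Sx_r.
by rewrite {1}p_s -nua_mulA -z_central z_Sx nua_mulZr -p_s.
Qed.

Lemma central_scalar_saturated u : (0 < k)%N -> vertex u ->
  (forall l, r l = u -> d l = ones -> mul (p (s l)) z = c *: p (s l)) ->
  mul (p u) z = c *: p u.
Proof.
move=> k_gt0 vu sz.
have [sq sq_uniq sqP] := paths_enum ones rowfin vu.
rewrite (KP4_Sx vu (dconst1_neq0 k_gt0) sq_uniq sqP) nua_mul_suml scaler_sumr.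
apply: eq_big_seq => l /sqP [rl dl].
have z_Sxstar : mul z (Sxstar l) = c *: Sxstar l.
  by rewrite -{1}Sxstar_s nua_mulA z_central sz // nua_mulZl Sxstar_s.
by rewrite -nua_mulA -z_central z_Sxstar nua_mulZr.
Qed.

Lemma central_scalar_everywhere : (0 < k)%N -> cofinal G ->
  (exists2 v, vertex v & mul (p v) z = c *: p v) ->
  forall u, vertex u -> mul (p u) z = c *: p u.
Proof.
move=> k_gt0 cof somewhere; apply: (cofinal_vertex_ind cof somewhere).
  exact: central_scalar_s.
by move=> u vu; apply: central_scalar_saturated.
Qed.
End Central.

Lemma exists_vertex_notin : ~ finite_vertices G -> forall F : seq P,
  exists2 v, vertex v & v \notin F.
Proof.
move=> infinite F; apply: NNPP => none; apply: infinite; exists F => v vv.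
by apply: NNPP => /negP vF; apply: none; exists v.
Qed.

Lemma vertex_seq_of_finite : finite_vertices G ->
  exists2 V, vertex_seq V & forall v, vertex v -> v \in V.
Proof.
move=> [sq sqP]; exists (undup [seq v <- sq | d v == dzero k]).
  split=> [|u]; first exact: undup_uniq.
  by rewrite mem_undup mem_filter => /andP [/eqP du _].
by move=> v vv; rewrite mem_undup mem_filter vv eqxx sqP.
Qed.

Lemma vsum_all_unit V : KP_generated p S Sstar -> vertex_seq V ->
  (forall v, vertex v -> v \in V) -> forall a, local_unit V a.
Proof.
move=> gen vV allV a; have [F vF Fa] := exists_local_unit gen a.
by apply: local_unit_sub Fa => // u /vF.2 /allV.
Qed.

Lemma central_scalar_aperiodic z : (0 < k)%N -> cofinal G -> KP_generated p S Sstar ->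
  central z -> exists c : R, forall u, vertex u -> mul (p u) z = c *: p u.
Proof.
move=> k_gt0 cof gen zc; have [[v vv]|none] := classic (exists v : P, vertex v); last first.
  by exists 0 => u vu; case: none; exists u.
have [al r_al [c al_c]] := compressible_generated gen z v.
have := al_c (s al) (kr_ks al); rewrite kvert_s // in r_al.
rewrite -r_al kcomp_idl kcomp_idr ks_ks zc nua_mulA Sxstar_Sx // eqxx => s_al.
exists c; apply: (central_scalar_everywhere zc k_gt0 cof).
by exists (s al) => //; apply: vertex_s.
Qed.

End KPFamily.

Theorem theorem4p7 (k : nat) (R : comPzRingType) (G : kgraph k)
    (A : nualg R) (p S Sstar : kpath G -> A) :
  (0 < k)%N -> row_finite G -> no_sources G ->
  is_KP_algebra p S Sstar ->
  (aperiodic G -> cofinal G -> finite_vertices G ->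
     exists one : A,
       (forall a : A, nua_mul A one a = a /\ nua_mul A a one = a) /\
       (forall z : A, central z <-> exists x : R, z = x *: one)) /\
  (cofinal G -> ~ finite_vertices G ->
     forall z : A, central z <-> z = 0).
Proof.
move=> k_gt0 rowfin nosrc [fam gen _]; split.
- move=> aper cof /vertex_seq_of_finite [V vV allV].
  have unitV := vsum_all_unit fam gen vV allV.
  exists (vsum p V); split=> // z; split=> [zc | [x ->] a]; last first.
    by rewrite nua_mulZl nua_mulZr (unitV a).1 (unitV a).2.
  have [c zc_c] := central_scalar_aperiodic fam rowfin aper nosrc k_gt0 cof gen zc.
  exists c; rewrite -(unitV z).1; apply: vsum_mul_scalar => u /vV.2; exact: zc_c.
- move=> cof infinite z; split=> [zc | ->]; last by move=> a; rewrite nua_mul0l nua_mul0r.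
  have [F vF [Fz _]] := exists_local_unit fam gen z.
  have [v vv vF'] := exists_vertex_notin infinite F.
  have vz : nua_mul A (p v) z = 0 *: p v.
    by rewrite -Fz nua_mulA (p_vsum_notin fam vF vv vF') nua_mul0l scale0r.
  have zero := central_scalar_everywhere fam rowfin zc k_gt0 cof (ex_intro2 _ _ v vv vz).
  by rewrite -Fz (vsum_mul_scalar (fun u uF => zero u (vF.2 u uF))) scale0r.
Qed.
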